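(* Let $n>d$ be positive integers, $\alpha\in(0,1)$, $\hat\theta\in\mathbb{R}$, $\hat\sigma\in(0,\infty)$ fixed, and $\hat\theta_L=\hat\theta-t_{n-d,1-\alpha/2}\hat\sigma/\sqrt n$, $\hat\theta_U=\hat\theta+t_{n-d,1-\alpha/2}\hat\sigma/\sqrt n$. Then, as $m\to\infty$, $$1-\Phi\big(\sqrt{m/n}\,\delta_U(c)\big)\to\begin{cases}1 & c<\hat\theta_L,\\ 1/2 & c=\hat\theta_L,\\ 0 & c>\hat\theta_L,\end{cases}\qquad 1-\Phi\big(\sqrt{m/n}\,\delta_L(c)\big)\to\begin{cases}1 & c<\hat\theta_U,\\ 1/2 & c=\hat\theta_U,\\ 0 & c>\hat\theta_U.\end{cases}$$
   Context: $\Phi$ is the standard normal CDF. For $\nu>0$, $\delta\in\mathbb{R}$, $F_{\nu,\delta}$ is the CDF of the noncentral $t$-distribution with $\nu$ degrees of freedom and noncentrality $\delta$, and $t_{\nu,p}=F_{\nu,0}^{-1}(p)$. For a cutoff $c\in\mathbb{R}$ let $q(c)=\sqrt n\,(c-\hat\theta)/\hat\sigma$, and let $\delta_L(c),\delta_U(c)$ be the unique reals with $F_{n-d,\delta_L(c)}(q(c))=1-\alpha/2$ and $F_{n-d,\delta_U(c)}(q(c))=\alpha/2$. *)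

From Stdlib Require Import Reals Lra ClassicalEpsilon.
Open Scope R_scope.

Definition is_RInt (f : R -> R) (a b l : R) : Prop :=
  exists pr : Riemann_integrable f a b, RiemannInt pr = l.

(* The Riemann integral (chosen value; well defined when f is integrable). *)
Definition RInt (f : R -> R) (a b : R) : R :=
  epsilon (inhabits 0) (fun l => is_RInt f a b l).

Definition is_RInt_0_infty (f : R -> R) (l : R) : Prop :=
  forall eps, 0 < eps -> exists M, forall b, M <= b ->
    exists l', is_RInt f 0 b l' /\ Rabs (l' - l) < eps.

Definition RInt_0_infty (f : R -> R) : R :=
  epsilon (inhabits 0) (fun l => is_RInt_0_infty f l).

Definition Phi (z : R) : R :=
  / 2 + / sqrt (2 * PI) * RInt (fun t => exp (- (t ^ 2) / 2)) 0 z.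

Definition chi_weight (nu : nat) (s : R) : R := s ^ (nu - 1) * exp (- (s ^ 2) / 2).

(* CDF of the noncentral t distribution with nu d.f. and noncentrality delta:
   T = (Z + delta) / sqrt(V/nu), V ~ chi^2_nu, so with S = sqrt V ~ chi_nu,
   F(x) = E[ Phi (x S / sqrt nu - delta) ]. *)
Definition Fnct (nu : nat) (delta x : R) : R :=
  RInt_0_infty (fun s => Phi (x * s / sqrt (INR nu) - delta) * chi_weight nu s)
  / RInt_0_infty (chi_weight nu).

Definition tquant (nu : nat) (p : R) : R :=
  epsilon (inhabits 0) (fun x => Fnct nu 0 x = p).

Definition qstat (n : nat) (theta sigma c : R) : R :=
  sqrt (INR n) * (c - theta) / sigma.

Definition deltaL (n d : nat) (alpha theta sigma c : R) : R :=
  epsilon (inhabits 0)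
    (fun delta => Fnct (n - d) delta (qstat n theta sigma c) = 1 - alpha / 2).

Definition deltaU (n d : nat) (alpha theta sigma c : R) : R :=
  epsilon (inhabits 0)
    (fun delta => Fnct (n - d) delta (qstat n theta sigma c) = alpha / 2).

(* Writing S for a chi_nu variable, the noncentral t CDF is the mean
   F(d, x) = E Phi (x S / sqrt nu - d).  Since Phi is strictly increasing, Lipschitz and
   tends to 0 and 1 at -oo and +oo (its normalisation sqrt (2 PI) comes from Euler's
   identity for the Gaussian integral), F is continuous, strictly decreasing in d, strictly
   increasing in x, and takes values arbitrarily close to 0 and 1 in each variable; so the
   quantile t and the roots delta_L, delta_U exist by the intermediate value theorem.
   Comparing F(delta_U, q) = alpha/2 = F(0, -t) shows that delta_U has the sign of q + t,
   i.e. of c - theta_L, and likewise delta_L has the sign of c - theta_U.  Finally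
   sqrt (m / n) -> +oo, so 1 - Phi (sqrt (m / n) delta) -> 1, 1/2 or 0 according to the
   sign of delta. *)

From Pilot Require Import Defs.
From Stdlib Require Import Reals Lra Lia ClassicalEpsilon FunctionalExtensionality.
From Coquelicot Require Import Coquelicot.
Open Scope R_scope.

Lemma ex_RInt_continuous_R (f : R -> R) (a b : R) :
  (forall x, continuous f x) -> ex_RInt f a b.
Proof. intros Hf. apply (@ex_RInt_continuous R_CompleteNormedModule). intros x _. apply Hf. Qed.

Lemma continuous_sub_R (f g : R -> R) :
  (forall x, continuous f x) -> (forall x, continuous g x) ->
  forall x, continuous (fun s => f s - g s) x.
Proof.
intros Hf Hg x. apply (@continuous_minus R_UniformSpace R_AbsRing R_NormedModule); auto.
Qed.

Lemma RInt_Chasles_continuous (f : R -> R) (a b c : R) :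
  (forall x, continuous f x) -> RInt f a b + RInt f b c = RInt f a c.
Proof. intros Hf. apply (@RInt_Chasles R_CompleteNormedModule); apply ex_RInt_continuous_R, Hf. Qed.

Lemma RInt_sub_continuous (f : R -> R) (a b c : R) :
  (forall x, continuous f x) -> RInt f a c - RInt f a b = RInt f b c.
Proof. intros Hf. rewrite <- (RInt_Chasles_continuous f a b c Hf). lra. Qed.

Lemma abs_RInt_le_RInt (f g : R -> R) (a b : R) :
  a <= b -> (forall x, continuous f x) -> (forall x, continuous g x) ->
  (forall t, a <= t <= b -> Rabs (f t) <= g t) -> Rabs (RInt f a b) <= RInt g a b.
Proof.
intros Hab Hf Hg Hfg.
eapply Rle_trans; [apply abs_RInt_le; [exact Hab | apply ex_RInt_continuous_R, Hf] |].
apply RInt_le; [exact Hab | | apply ex_RInt_continuous_R, Hg |].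
- apply ex_RInt_continuous_R. intros x.
  apply (@continuous_comp R_UniformSpace R_UniformSpace R_UniformSpace f Rabs);
    [apply Hf | apply continuous_Rabs].
- intros t Ht. apply Hfg. lra.
Qed.

Lemma Defs_is_RInt_RInt (f : R -> R) (a b : R) :
  (forall x, continuous f x) -> Defs.is_RInt f a b (RInt f a b).
Proof.
intros Hf. exists (ex_RInt_Reals_0 _ _ _ (ex_RInt_continuous_R f a b Hf)).
symmetry. apply RInt_Reals.
Qed.

Lemma Defs_is_RInt_unique (f : R -> R) (a b l : R) :
  Defs.is_RInt f a b l -> l = RInt f a b.
Proof. intros [pr <-]. symmetry. apply RInt_Reals. Qed.

Lemma Defs_RInt_continuous (f : R -> R) (a b : R) :
  (forall x, continuous f x) -> Defs.RInt f a b = RInt f a b.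
Proof.
intros Hf. apply Defs_is_RInt_unique. unfold Defs.RInt.
apply (epsilon_spec (inhabits 0) (fun l => Defs.is_RInt f a b l)).
exists (RInt f a b). apply Defs_is_RInt_RInt, Hf.
Qed.

Lemma exp_le_exp_of_le (a b : R) : a <= b -> exp a <= exp b.
Proof. intros [Hab | ->]; [left; apply exp_increasing |]; lra. Qed.

Definition gauss (t : R) : R := exp (- (t ^ 2) / 2).

Lemma gauss_continuous (x : R) : continuous gauss x.
Proof. apply (@ex_derive_continuous R_AbsRing R_NormedModule). unfold gauss. auto_derive. easy. Qed.

Lemma gauss_pos (x : R) : 0 < gauss x.
Proof. apply exp_pos. Qed.

Lemma gauss_le_1 (x : R) : gauss x <= 1.
Proof. unfold gauss. rewrite <- exp_0. apply exp_le_exp_of_le. nra. Qed.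

Lemma gauss_le_inv (y : R) : 0 < y -> gauss y <= / y.
Proof.
intros Hy. unfold gauss. replace (- (y ^ 2) / 2) with (- (y ^ 2 / 2)) by field.
rewrite exp_Ropp. apply Rinv_le_contravar; [lra |].
assert (Hexp := exp_ineq1_le (y ^ 2 / 2)). nra.
Qed.

Definition gauss_prim (x : R) : R := RInt gauss 0 x.

Lemma gauss_prim_derive (x : R) : is_derive gauss_prim x (gauss x).
Proof.
apply (@is_derive_RInt R_NormedModule gauss gauss_prim 0 x).
- apply filter_forall. intros b. apply (@RInt_correct R_CompleteNormedModule).
  apply ex_RInt_continuous_R, gauss_continuous.
- apply gauss_continuous.
Qed.

Lemma gauss_prim_sub (a b : R) : gauss_prim b - gauss_prim a = RInt gauss a b.
Proof. apply RInt_sub_continuous, gauss_continuous. Qed.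

Lemma gauss_prim_opp (z : R) : gauss_prim (- z) = - gauss_prim z.
Proof.
unfold gauss_prim.
assert (E := @RInt_comp_lin R_CompleteNormedModule gauss (-1) 0 0 z
               (ex_RInt_continuous_R _ _ _ gauss_continuous)).
replace (-1 * 0 + 0) with 0 in E by ring. replace (-1 * z + 0) with (- z) in E by ring.
rewrite <- E, (RInt_ext _ (fun y => opp (gauss y))).
- apply (@RInt_opp R_CompleteNormedModule), ex_RInt_continuous_R, gauss_continuous.
- intros y _. unfold scal, opp; simpl; unfold mult; simpl. unfold gauss.
  replace ((-1 * y + 0) ^ 2) with (y ^ 2) by ring. ring.
Qed.

(* Euler's trick for the Gaussian integral: [gauss_prim x ^ 2 + 2 * euler_aux x] has zero
   derivative, equals [2 * atan 1 = PI / 2] at [x = 0], and [euler_aux x <= gauss x]. *)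
Definition euler_integrand (u t : R) : R := exp (- (u ^ 2 * (1 + t ^ 2)) / 2) / (1 + t ^ 2).

Definition euler_aux (x : R) : R := RInt (euler_integrand x) 0 1.

Lemma euler_integrand_derive (u t : R) :
  is_derive (fun z => euler_integrand z t) u (- u * exp (- (u ^ 2 * (1 + t ^ 2)) / 2)).
Proof.
unfold euler_integrand. assert (Ht : 0 < 1 + t ^ 2) by nra.
auto_derive; [lra |].
replace (- (u * (u * 1) * (1 + t * (t * 1))) * / 2) with (- (u ^ 2 * (1 + t ^ 2)) / 2)
  by (simpl; field).
field. lra.
Qed.

Lemma euler_integrand_continuous (u t : R) : continuous (euler_integrand u) t.
Proof.
apply (@ex_derive_continuous R_AbsRing R_NormedModule). unfold euler_integrand.
auto_derive. nra.
Qed.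

Lemma euler_integrand_derive_continuous (x t : R) :
  continuity_2d_pt (fun u v => Derive (fun z => euler_integrand z v) u) x t.
Proof.
apply continuity_2d_pt_ext with
  (f := fun u v => - u * exp ((- / 2) * ((u * u) * (1 + v * v)))).
{ intros u v. replace (- / 2 * (u * u * (1 + v * v))) with (- (u ^ 2 * (1 + v ^ 2)) / 2)
    by (simpl; field).
  symmetry. apply is_derive_unique, euler_integrand_derive. }
apply continuity_2d_pt_mult; [apply continuity_2d_pt_opp, continuity_2d_pt_id1 |].
apply (continuity_1d_2d_pt_comp exp); [apply derivable_continuous_pt, derivable_pt_exp |].
apply continuity_2d_pt_mult; [apply continuity_2d_pt_const |].
apply continuity_2d_pt_mult;
  [apply continuity_2d_pt_mult; apply continuity_2d_pt_id1 |].
apply continuity_2d_pt_plus; [apply continuity_2d_pt_const |].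
apply continuity_2d_pt_mult; apply continuity_2d_pt_id2.
Qed.

Lemma euler_aux_derive (x : R) : is_derive euler_aux x (- gauss x * gauss_prim x).
Proof.
replace (- gauss x * gauss_prim x)
  with (RInt (fun t => Derive (fun u => euler_integrand u t) x) 0 1).
- apply (is_derive_RInt_param euler_integrand 0 1 x).
  + apply filter_forall. intros y t _. eexists. apply euler_integrand_derive.
  + intros t _. apply euler_integrand_derive_continuous.
  + apply filter_forall. intros y. apply ex_RInt_continuous_R, euler_integrand_continuous.
- rewrite (RInt_ext _ (fun t => scal (- gauss x) (scal x (gauss (x * t + 0))))).
  2:{ intros t _. erewrite is_derive_unique; [| apply euler_integrand_derive].
      unfold gauss.
      replace (- (x ^ 2 * (1 + t ^ 2)) / 2) with (- (x ^ 2) / 2 + - ((x * t + 0) ^ 2) / 2)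
        by field.
      rewrite exp_plus. unfold scal; simpl; unfold mult; simpl. ring. }
  rewrite (@RInt_scal R_CompleteNormedModule).
  2:{ apply ex_RInt_continuous_R. intros y.
      apply (@ex_derive_continuous R_AbsRing R_NormedModule).
      unfold gauss, scal; simpl; unfold mult; simpl. auto_derive. easy. }
  rewrite (@RInt_comp_lin R_CompleteNormedModule);
    [| apply ex_RInt_continuous_R, gauss_continuous].
  unfold gauss_prim, scal; simpl; unfold mult; simpl. do 2 f_equal; ring.
Qed.

Lemma euler_aux_0 : euler_aux 0 = PI / 4.
Proof.
unfold euler_aux. rewrite (RInt_ext _ (fun t => / (1 + t ^ 2))).
2:{ intros t _. unfold euler_integrand.
    replace (- (0 ^ 2 * (1 + t ^ 2)) / 2) with 0 by (simpl; field).
    rewrite exp_0. unfold Rdiv. apply Rmult_1_l. }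
rewrite (is_RInt_unique _ _ _ _ (@is_RInt_derive R_CompleteNormedModule atan _ 0 1
  (fun x _ => proj2 (is_derive_Reals _ _ _) (derivable_pt_lim_atan x))
  (fun x _ => ltac:(apply (@ex_derive_continuous R_AbsRing R_NormedModule);
                    auto_derive; nra)))).
rewrite atan_1, atan_0. unfold minus, plus, opp; simpl. ring.
Qed.

Lemma gauss_prim_sq_add_euler (x : R) : gauss_prim x ^ 2 + 2 * euler_aux x = PI / 2.
Proof.
set (F := fun x => gauss_prim x ^ 2 + 2 * euler_aux x).
assert (D : forall y, is_derive F y 0).
{ intros y.
  assert (Dsq := @is_derive_mult R_AbsRing gauss_prim gauss_prim y _ _
                   (gauss_prim_derive y) (gauss_prim_derive y) Rmult_comm).
  assert (Dsum := @is_derive_plus R_AbsRing R_NormedModule _ _ y _ _ Dsq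
                   (is_derive_scal euler_aux y 2 _ (euler_aux_derive y))).
  unfold plus, mult, scal in Dsum; simpl in Dsum; unfold mult in Dsum; simpl in Dsum.
  eapply is_derive_ext; [| replace 0 with (gauss y * gauss_prim y + gauss_prim y * gauss y
                                          + 2 * (- gauss y * gauss_prim y)) by ring; exact Dsum].
  intros t. unfold F. simpl. ring. }
assert (E := is_RInt_unique _ _ _ _ (@is_RInt_derive R_CompleteNormedModule F (fun _ => 0) 0 x
               (fun y _ => D y) (fun y _ => continuous_const _ y))).
rewrite RInt_const in E.
unfold minus, plus, opp, scal in E; simpl in E; unfold mult in E; simpl in E.
assert (G0 : gauss_prim 0 = 0) by apply (@RInt_point R_CompleteNormedModule).
unfold F in E. rewrite G0, euler_aux_0 in E. lra.
Qed.

Lemma euler_aux_bounds (x : R) : 0 <= euler_aux x <= gauss x.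
Proof.
unfold euler_aux.
assert (Hint := ex_RInt_continuous_R _ 0 1 (euler_integrand_continuous x)).
split.
- apply RInt_ge_0; [lra | exact Hint |]. intros t _. unfold euler_integrand.
  apply Rlt_le, Rdiv_lt_0_compat; [apply exp_pos | nra].
- replace (gauss x) with (RInt (fun _ => gauss x) 0 1)
    by (rewrite RInt_const; unfold scal; simpl; unfold mult; simpl; ring).
  apply RInt_le; [lra | exact Hint | apply ex_RInt_const |].
  intros t Ht. unfold euler_integrand, gauss. assert (Ht2 : 0 <= t ^ 2) by nra.
  apply Rle_trans with (exp (- (x ^ 2 * (1 + t ^ 2)) / 2)).
  + unfold Rdiv at 1. rewrite <- (Rmult_1_r (exp _)) at 2.
    apply Rmult_le_compat_l; [apply Rlt_le, exp_pos |].
    rewrite <- Rinv_1. apply Rinv_le_contravar; lra.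
  + apply exp_le_exp_of_le. assert (0 <= x ^ 2) by nra. nra.
Qed.

Lemma gauss_prim_lipschitz (a b : R) : Rabs (gauss_prim b - gauss_prim a) <= Rabs (b - a).
Proof.
assert (Hle : forall a b, a <= b -> Rabs (gauss_prim b - gauss_prim a) <= Rabs (b - a)).
{ clear a b. intros a b Hab. rewrite gauss_prim_sub, (Rabs_right (b - a)) by lra.
  rewrite <- (Rmult_1_r (b - a)).
  apply abs_RInt_le_const; [exact Hab | apply ex_RInt_continuous_R, gauss_continuous |].
  intros t _. rewrite Rabs_right; [apply gauss_le_1 | apply Rle_ge, Rlt_le, gauss_pos]. }
destruct (Rle_dec a b) as [Hab | Hab]; [apply Hle, Hab |].
rewrite Rabs_minus_sym, (Rabs_minus_sym b). apply Hle. lra.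
Qed.

Lemma sqrt_2PI_pos : 0 < sqrt (2 * PI).
Proof. apply sqrt_lt_R0. assert (Hpi := PI_RGT_0). lra. Qed.

Lemma Phi_gauss_prim (z : R) : Phi z = / 2 + gauss_prim z / sqrt (2 * PI).
Proof.
unfold Phi. change (fun t => exp (- (t ^ 2) / 2)) with gauss.
rewrite (Defs_RInt_continuous gauss 0 z gauss_continuous). unfold gauss_prim, Rdiv. ring.
Qed.

Lemma Phi_0 : Phi 0 = / 2.
Proof.
rewrite Phi_gauss_prim. unfold gauss_prim. rewrite (@RInt_point R_CompleteNormedModule).
unfold zero; simpl. unfold Rdiv. ring.
Qed.

Lemma Phi_opp (z : R) : Phi (- z) = 1 - Phi z.
Proof. rewrite !Phi_gauss_prim, gauss_prim_opp. field. apply Rgt_not_eq, sqrt_2PI_pos. Qed.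

Lemma Phi_increasing (a b : R) : a < b -> Phi a < Phi b.
Proof.
intros Hab. rewrite !Phi_gauss_prim. apply Rplus_lt_compat_l.
apply Rmult_lt_compat_r; [apply Rinv_0_lt_compat, sqrt_2PI_pos |].
assert (Hpos : 0 < RInt gauss a b).
{ apply RInt_gt_0; [exact Hab | intros; apply gauss_pos | intros; apply gauss_continuous]. }
rewrite <- gauss_prim_sub in Hpos. lra.
Qed.

Lemma Phi_lipschitz (a b : R) : Rabs (Phi b - Phi a) <= Rabs (b - a).
Proof.
assert (Hs : 1 <= sqrt (2 * PI)).
{ rewrite <- sqrt_1. apply sqrt_le_1_alt. assert (Hpi := PI2_3_2). lra. }
rewrite !Phi_gauss_prim.
replace (/ 2 + gauss_prim b / sqrt (2 * PI) - (/ 2 + gauss_prim a / sqrt (2 * PI)))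
  with ((gauss_prim b - gauss_prim a) / sqrt (2 * PI)) by (field; lra).
rewrite Rabs_div, (Rabs_right (sqrt (2 * PI))) by lra.
apply Rle_trans with (Rabs (gauss_prim b - gauss_prim a)); [| apply gauss_prim_lipschitz].
apply Rmult_le_reg_r with (sqrt (2 * PI)); [lra |]. unfold Rdiv.
rewrite Rmult_assoc, Rinv_l by lra. assert (Habs := Rabs_pos (gauss_prim b - gauss_prim a)). nra.
Qed.

Lemma Phi_continuous (z : R) : continuous Phi z.
Proof.
apply (proj1 (continuity_pt_filterlim _ _)). intros eps Heps.
exists eps. split; [exact Heps |]. intros y [_ Hy]. simpl in *. unfold R_dist in *.
eapply Rle_lt_trans; [apply Phi_lipschitz | exact Hy].
Qed.

(* [euler_aux >= 0] bounds [gauss_prim ^ 2] by [PI / 2 = (sqrt (2 * PI) / 2) ^ 2]. *)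
Lemma Phi_bounds (z : R) : 0 <= Phi z <= 1.
Proof.
rewrite Phi_gauss_prim. assert (Hs := sqrt_2PI_pos).
assert (Hsq : sqrt (2 * PI) * sqrt (2 * PI) = 2 * PI)
  by (apply sqrt_sqrt; assert (Hpi := PI_RGT_0); lra).
assert (Hid := gauss_prim_sq_add_euler z). assert (He := euler_aux_bounds z).
set (s := sqrt (2 * PI)) in *. set (g := gauss_prim z) in *. simpl in Hid.
assert (Hg : - (s / 2) <= g <= s / 2) by (split; nra).
split; apply Rmult_le_reg_r with s; try exact Hs; unfold Rdiv;
  rewrite Rmult_plus_distr_r, Rmult_assoc, Rinv_l by lra; lra.
Qed.

(* Here [euler_aux <= gauss] enters: [PI / 2 - gauss_prim y ^ 2 <= 2 * gauss y]. *)
Lemma one_minus_Phi_le_gauss (y : R) : 0 <= y -> 1 - Phi y <= gauss y.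
Proof.
intros Hy. rewrite Phi_gauss_prim. assert (Hs := sqrt_2PI_pos).
assert (Hpi := PI2_3_2).
assert (Hsq : sqrt (2 * PI) * sqrt (2 * PI) = 2 * PI) by (apply sqrt_sqrt; lra).
assert (Hid := gauss_prim_sq_add_euler y). assert (He := euler_aux_bounds y).
assert (Hg0 : 0 <= gauss_prim y).
{ unfold gauss_prim. apply RInt_ge_0; [exact Hy | apply ex_RInt_continuous_R, gauss_continuous |].
  intros; apply Rlt_le, gauss_pos. }
set (s := sqrt (2 * PI)) in *. set (g := gauss_prim y) in *. simpl in Hid.
assert (Hgs : g <= s / 2) by nra.
assert (Hgap : (s / 2 - g) * (s / 2 + g) <= 2 * gauss y) by nra.
assert (Hgap' : (s / 2 - g) * (s / 2) <= 2 * gauss y) by nra.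
apply Rmult_le_reg_r with s; [exact Hs |].
replace ((1 - (/ 2 + g / s)) * s) with (s / 2 - g) by (field; lra).
nra.
Qed.

Lemma one_minus_Phi_le_inv (y : R) : 0 < y -> 1 - Phi y <= / y.
Proof.
intros Hy. eapply Rle_trans; [apply one_minus_Phi_le_gauss; lra | apply gauss_le_inv, Hy].
Qed.

Lemma Phi_upper_tail (eta z : R) : 0 < eta -> / eta <= z -> 1 - Phi z <= eta.
Proof.
intros Heta Hz. assert (Hinv := Rinv_0_lt_compat eta Heta).
apply Rle_trans with (/ z); [apply one_minus_Phi_le_inv; lra |].
rewrite <- (Rinv_inv eta). apply Rinv_le_contravar; lra.
Qed.

Lemma Phi_lower_tail (eta z : R) : 0 < eta -> z <= - / eta -> Phi z <= eta.
Proof.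
intros Heta Hz. replace z with (- - z) by ring. rewrite Phi_opp.
apply Phi_upper_tail; lra.
Qed.

Lemma exp_opp_mult_small (C eps : R) :
  0 <= C -> 0 < eps -> exists X, forall x, X <= x -> C * exp (- x) < eps.
Proof.
intros HC Heps. exists ((C + 1) / eps). intros x Hx.
assert (HX : 0 < (C + 1) / eps) by (apply Rdiv_lt_0_compat; lra).
assert (Hexp := exp_ineq1_le x). assert (Hpos := exp_pos x).
rewrite exp_Ropp. apply Rmult_lt_reg_r with (exp x); [exact Hpos |].
rewrite Rmult_assoc, Rinv_l by lra.
apply Rmult_le_compat_l with (r := eps) in Hx; [| lra].
replace (eps * ((C + 1) / eps)) with (C + 1) in Hx by (field; lra). nra.
Qed.

Lemma Rle_of_exp_error (x y C B : R) :
  0 <= C -> (forall b, B <= b -> x <= y + C * exp (- b)) -> x <= y.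
Proof.
intros HC Hb. apply Rle_plus_epsilon. intros eps Heps.
destruct (exp_opp_mult_small C eps HC Heps) as [X HX].
specialize (Hb (Rmax B X) (Rmax_l _ _)). specialize (HX (Rmax B X) (Rmax_r _ _)). lra.
Qed.

Lemma RInt_exp_opp_le (a b : R) : a <= b -> RInt (fun s => exp (- s)) a b <= exp (- a).
Proof.
intros Hab.
assert (D : forall x, Rmin a b <= x <= Rmax a b -> is_derive (fun s => - exp (- s)) x (exp (- x)))
  by (intros x _; auto_derive; [easy | ring]).
assert (C : forall x, Rmin a b <= x <= Rmax a b -> continuous (fun s => exp (- s)) x)
  by (intros x _; apply (@ex_derive_continuous R_AbsRing R_NormedModule); auto_derive; easy).
rewrite (is_RInt_unique _ _ _ _ (@is_RInt_derive R_CompleteNormedModule _ _ a b D C)).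
unfold minus, plus, opp; simpl. assert (Hexp := exp_pos (- b)). lra.
Qed.

Lemma is_RInt_0_infty_unique (f : R -> R) (l l' : R) :
  is_RInt_0_infty f l -> is_RInt_0_infty f l' -> l = l'.
Proof.
intros Hl Hl'. apply Rminus_diag_uniq, Rabs_eq_0, Rle_antisym; [| apply Rabs_pos].
apply Rle_plus_epsilon. intros eps Heps.
destruct (Hl (eps / 2) ltac:(lra)) as [X HX]. destruct (Hl' (eps / 2) ltac:(lra)) as [X' HX'].
destruct (HX (Rmax X X') (Rmax_l _ _)) as [r [Hr Hrl]].
destruct (HX' (Rmax X X') (Rmax_r _ _)) as [r' [Hr' Hrl']].
rewrite (Defs_is_RInt_unique _ _ _ _ Hr) in Hrl. rewrite (Defs_is_RInt_unique _ _ _ _ Hr') in Hrl'.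
replace (l - l') with (- (RInt f 0 (Rmax X X') - l) + (RInt f 0 (Rmax X X') - l')) by ring.
eapply Rle_trans; [apply Rabs_triang |]. rewrite Rabs_Ropp. lra.
Qed.

Lemma RInt_0_infty_eq (f : R -> R) (l : R) : is_RInt_0_infty f l -> RInt_0_infty f = l.
Proof.
intros Hl. apply (is_RInt_0_infty_unique f); [| exact Hl].
apply (epsilon_spec (inhabits 0) (fun l => is_RInt_0_infty f l)). exists l. exact Hl.
Qed.

Section ExpDominated.

Variables (f : R -> R) (M B0 : R).
Hypothesis f_continuous : forall x, continuous f x.
Hypothesis f_dominated : forall s, B0 <= s -> Rabs (f s) <= M * exp (- s).

Lemma exp_dominated_const_ge0 : 0 <= M.
Proof.
assert (H := f_dominated B0 (Rle_refl _)). assert (Hexp := exp_pos (- B0)).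
assert (Habs := Rabs_pos (f B0)). nra.
Qed.

Lemma exp_dominated_RInt_tail (b b' : R) :
  B0 <= b -> b <= b' -> Rabs (RInt f 0 b' - RInt f 0 b) <= M * exp (- b).
Proof.
intros Hb Hbb'. assert (HM := exp_dominated_const_ge0).
rewrite (RInt_sub_continuous f 0 b b' f_continuous).
eapply Rle_trans.
- apply (abs_RInt_le_RInt f (fun s => M * exp (- s))); [exact Hbb' | exact f_continuous | |].
  + intros x. apply (@ex_derive_continuous R_AbsRing R_NormedModule). auto_derive. easy.
  + intros t Ht. apply f_dominated. lra.
- rewrite (RInt_ext _ (fun s => scal M (exp (- s)))) by reflexivity.
  rewrite (@RInt_scal R_CompleteNormedModule).
  2:{ apply ex_RInt_continuous_R. intros x.
      apply (@ex_derive_continuous R_AbsRing R_NormedModule). auto_derive. easy. }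
  unfold scal; simpl; unfold mult; simpl.
  apply Rmult_le_compat_l; [exact HM | apply RInt_exp_opp_le, Hbb'].
Qed.

Lemma exp_dominated_limit :
  exists L, forall b, B0 <= b -> Rabs (RInt f 0 b - L) <= M * exp (- b).
Proof.
assert (HM := exp_dominated_const_ge0).
set (u := fun k : nat => RInt f 0 (Rmax B0 0 + INR k)).
assert (Hu : forall k b, B0 <= b -> b <= Rmax B0 0 + INR k ->
                         Rabs (u k - RInt f 0 b) <= M * exp (- b))
  by (intros k b Hb Hbk; apply exp_dominated_RInt_tail; assumption).
assert (Hcauchy : Cauchy_crit u).
{ intros eps Heps. destruct (exp_opp_mult_small M (eps / 2) HM ltac:(lra)) as [X HX].
  destruct (INR_unbounded X) as [N HN].
  exists N. intros k l Hk Hl. unfold Rdist.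
  assert (HB := Rmax_l B0 0). assert (H0 := Rmax_r B0 0). assert (HN0 := pos_INR N).
  assert (HNk := le_INR _ _ Hk). assert (HNl := le_INR _ _ Hl).
  set (b := Rmax B0 0 + INR N).
  assert (Hk' := Hu k b ltac:(unfold b; lra) ltac:(unfold b; lra)).
  assert (Hl' := Hu l b ltac:(unfold b; lra) ltac:(unfold b; lra)).
  assert (Hsmall := HX b ltac:(unfold b; lra)).
  replace (u k - u l) with ((u k - RInt f 0 b) - (u l - RInt f 0 b)) by ring.
  eapply Rle_lt_trans; [apply Rabs_triang |]. rewrite Rabs_Ropp. lra. }
destruct (Rcomplete.R_complete u Hcauchy) as [L HL]. exists L. intros b Hb.
apply Rle_plus_epsilon. intros eps Heps. destruct (HL eps Heps) as [N1 HN1].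
destruct (INR_unbounded b) as [N2 HN2].
set (k := (N1 + N2)%nat).
assert (Hk := HN1 k ltac:(unfold k; lia)). unfold R_dist in Hk.
assert (Hbk : b <= Rmax B0 0 + INR k).
{ assert (H0 := Rmax_r B0 0). assert (INR N2 <= INR k) by (apply le_INR; unfold k; lia). lra. }
assert (Hub := Hu k b Hb Hbk).
replace (RInt f 0 b - L) with (- (u k - RInt f 0 b) + (u k - L)) by ring.
eapply Rle_trans; [apply Rabs_triang |]. rewrite Rabs_Ropp. lra.
Qed.

Lemma exp_dominated_RInt_0_infty_error (b : R) :
  B0 <= b -> Rabs (RInt f 0 b - RInt_0_infty f) <= M * exp (- b).
Proof.
destruct exp_dominated_limit as [L HL]. assert (HM := exp_dominated_const_ge0).
replace (RInt_0_infty f) with L; [apply HL |].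
symmetry. apply RInt_0_infty_eq. intros eps Heps.
destruct (exp_opp_mult_small M eps HM Heps) as [X HX].
exists (Rmax B0 X). intros b' Hb'. exists (RInt f 0 b'). split.
- apply Defs_is_RInt_RInt, f_continuous.
- eapply Rle_lt_trans; [apply HL | apply HX]; eapply Rle_trans; [| exact Hb' | | exact Hb'];
    [apply Rmax_l | apply Rmax_r].
Qed.

Lemma exp_dominated_RInt_le_RInt_0_infty (b : R) :
  0 <= b -> (forall s, 0 <= s -> 0 <= f s) -> RInt f 0 b <= RInt_0_infty f.
Proof.
intros Hb Hpos. apply (Rle_of_exp_error _ _ M (Rmax b B0) exp_dominated_const_ge0).
intros b' Hb'. assert (Hbb' : b <= b') by (eapply Rle_trans; [apply Rmax_l | exact Hb']).
assert (Herr := exp_dominated_RInt_0_infty_error b'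
                  ltac:(eapply Rle_trans; [apply Rmax_r | exact Hb'])).
apply Rabs_le_between in Herr.
assert (RInt f 0 b <= RInt f 0 b'); [| lra].
rewrite <- (RInt_Chasles_continuous f 0 b b' f_continuous). assert (0 <= RInt f b b'); [| lra].
apply RInt_ge_0; [exact Hbb' | apply ex_RInt_continuous_R, f_continuous |].
intros t Ht. apply Hpos. lra.
Qed.

End ExpDominated.

Lemma RInt_0_infty_minus (f g : R -> R) (Mf Mg B0 : R) :
  (forall x, continuous f x) -> (forall x, continuous g x) ->
  (forall s, B0 <= s -> Rabs (f s) <= Mf * exp (- s)) ->
  (forall s, B0 <= s -> Rabs (g s) <= Mg * exp (- s)) ->
  RInt_0_infty (fun s => f s - g s) = RInt_0_infty f - RInt_0_infty g.
Proof.
intros Hf Hg Hfd Hgd.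
assert (HMf := exp_dominated_const_ge0 f Mf B0 Hfd).
assert (HMg := exp_dominated_const_ge0 g Mg B0 Hgd).
assert (Hc := continuous_sub_R f g Hf Hg).
assert (Hd : forall s, B0 <= s -> Rabs (f s - g s) <= (Mf + Mg) * exp (- s)).
{ intros s Hs. eapply Rle_trans; [apply Rabs_triang |]. rewrite Rabs_Ropp.
  specialize (Hfd s Hs). specialize (Hgd s Hs). lra. }
apply Rminus_diag_uniq, Rabs_eq_0, Rle_antisym; [| apply Rabs_pos].
apply (Rle_of_exp_error _ 0 (2 * (Mf + Mg)) B0); [lra |]. intros b Hb.
assert (Efg := exp_dominated_RInt_0_infty_error _ _ _ Hc Hd b Hb).
assert (Ef := exp_dominated_RInt_0_infty_error _ _ _ Hf Hfd b Hb).
assert (Eg := exp_dominated_RInt_0_infty_error _ _ _ Hg Hgd b Hb).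
rewrite (@RInt_minus R_CompleteNormedModule) in Efg; try apply ex_RInt_continuous_R; auto.
unfold minus, plus, opp in Efg; simpl in Efg.
apply Rabs_le_between in Efg. apply Rabs_le_between in Ef. apply Rabs_le_between in Eg.
apply Rabs_le. lra.
Qed.

Lemma chi_weight_continuous (nu : nat) (s : R) : continuous (chi_weight nu) s.
Proof.
apply (@ex_derive_continuous R_AbsRing R_NormedModule). unfold chi_weight. auto_derive. easy.
Qed.

Lemma chi_weight_ge0 (nu : nat) (s : R) : 0 <= s -> 0 <= chi_weight nu s.
Proof. intros Hs. apply Rmult_le_pos; [apply pow_le, Hs | apply Rlt_le, exp_pos]. Qed.

Lemma chi_weight_pos (nu : nat) (s : R) : 0 < s -> 0 < chi_weight nu s.
Proof. intros Hs. apply Rmult_lt_0_compat; [apply pow_lt, Hs | apply exp_pos]. Qed.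

Lemma chi_weight_le_1 (nu : nat) (s : R) : 0 <= s <= 1 -> chi_weight nu s <= 1.
Proof.
intros Hs. unfold chi_weight. rewrite <- (Rmult_1_l 1).
apply Rmult_le_compat; [apply pow_le; lra | apply Rlt_le, exp_pos | | apply (gauss_le_1 s)].
rewrite <- (pow1 (nu - 1)). apply pow_incr. lra.
Qed.

Lemma exp_pow_nat (s : R) (k : nat) : exp s ^ k = exp (INR k * s).
Proof.
induction k as [| k IHk]; [simpl; rewrite Rmult_0_l, exp_0; reflexivity |].
rewrite S_INR. simpl. rewrite IHk, <- exp_plus. f_equal. ring.
Qed.

(* [s ^ (nu - 1) <= exp (s * (nu - 1))] and [s * nu <= s ^ 2 / 2] once [2 * nu <= s]. *)
Lemma chi_weight_le_exp_opp (nu : nat) (s : R) :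
  (1 <= nu)%nat -> 2 * INR nu <= s -> chi_weight nu s <= exp (- s).
Proof.
intros Hnu Hs. unfold chi_weight.
assert (Hk : INR (nu - 1) = INR nu - 1) by (rewrite minus_INR by exact Hnu; simpl; ring).
assert (H1 : 1 <= INR nu) by (apply (le_INR 1), Hnu).
apply Rle_trans with (exp s ^ (nu - 1) * exp (- s ^ 2 / 2)).
- apply Rmult_le_compat_r; [apply Rlt_le, exp_pos |].
  apply pow_incr. assert (Hexp := exp_ineq1_le s). lra.
- rewrite exp_pow_nat, <- exp_plus. apply exp_le_exp_of_le. rewrite Hk. simpl. nra.
Qed.

(* [chi_mean nu g] is the mean of [g S] for a chi-distributed [S] with [nu] degrees of freedom;
   [Fnct nu d x] unfolds to [chi_mean nu (fun s => Phi (x * s / sqrt (INR nu) - d))]. *)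
Definition chi_mean (nu : nat) (g : R -> R) : R :=
  RInt_0_infty (fun s => g s * chi_weight nu s) / RInt_0_infty (chi_weight nu).

Section ChiMean.

Variable nu : nat.
Hypothesis nu_pos : (1 <= nu)%nat.

Let w := chi_weight nu.
Let K := RInt_0_infty w.

Lemma chi_weighted_continuous (g : R -> R) :
  (forall x, continuous g x) -> forall x, continuous (fun s : R => g s * w s) x.
Proof.
intros Hg x.
apply (@continuous_mult R_UniformSpace R_AbsRing); [apply Hg | apply chi_weight_continuous].
Qed.

Lemma chi_weighted_dominated (g : R -> R) (L : R) :
  (forall s, 0 <= s -> Rabs (g s) <= L) ->
  forall s, 2 * INR nu <= s -> Rabs (g s * w s) <= L * exp (- s).
Proof.
intros Hg s Hs. assert (Hs0 : 0 <= s) by (assert (H := pos_INR nu); lra).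
rewrite Rabs_mult, (Rabs_right (w s)) by (apply Rle_ge, chi_weight_ge0, Hs0).
apply Rmult_le_compat; [apply Rabs_pos | apply chi_weight_ge0, Hs0 | apply Hg, Hs0 |].
apply chi_weight_le_exp_opp; assumption.
Qed.

Lemma chi_weight_dominated : forall s, 2 * INR nu <= s -> Rabs (w s) <= 1 * exp (- s).
Proof.
intros s Hs. rewrite <- (Rmult_1_l (w s)).
apply (chi_weighted_dominated (fun _ => 1)); [| exact Hs].
intros. rewrite Rabs_R1. lra.
Qed.

Lemma chi_norm_pos : 0 < K.
Proof.
apply Rlt_le_trans with (RInt w 0 1).
- apply RInt_gt_0; [lra | intros; apply chi_weight_pos; lra | intros; apply chi_weight_continuous].
- apply (exp_dominated_RInt_le_RInt_0_infty w 1 (2 * INR nu));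
    [apply (chi_weight_continuous nu) | exact chi_weight_dominated | lra | apply chi_weight_ge0].
Qed.

Lemma chi_weighted_integral_split (g : R -> R) (L a B e : R) :
  (forall x, continuous g x) -> (forall s, 0 <= s -> Rabs (g s) <= L) ->
  0 <= a <= 1 -> a <= B -> 2 * INR nu <= B -> 0 <= e ->
  (forall s, a <= s <= B -> Rabs (g s) <= e) ->
  Rabs (RInt_0_infty (fun s => g s * w s)) <= L * a + e * K + L * exp (- B).
Proof.
intros Hg HL Ha HaB HB He Hge.
assert (Hgw := chi_weighted_continuous g Hg).
assert (Htail := exp_dominated_RInt_0_infty_error _ _ _ Hgw (chi_weighted_dominated g L HL) B HB).
rewrite <- (RInt_Chasles_continuous _ 0 a B Hgw) in Htail.
assert (Hhead : Rabs (RInt (fun s => g s * w s) 0 a) <= (a - 0) * L).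
{ apply abs_RInt_le_const; [lra | apply ex_RInt_continuous_R, Hgw |]. intros t Ht.
  rewrite Rabs_mult, (Rabs_right (w t)) by (apply Rle_ge, chi_weight_ge0; lra).
  rewrite <- (Rmult_1_r L). apply Rmult_le_compat; [apply Rabs_pos | apply chi_weight_ge0; lra | |].
  - apply HL. lra.
  - apply chi_weight_le_1. lra. }
assert (Hmid : Rabs (RInt (fun s => g s * w s) a B) <= e * K).
{ eapply Rle_trans.
  - apply (abs_RInt_le_RInt _ (fun s => e * w s)); [exact HaB | exact Hgw | |].
    + apply chi_weighted_continuous. intros; apply continuous_const.
    + intros t Ht. rewrite Rabs_mult, (Rabs_right (w t)) by (apply Rle_ge, chi_weight_ge0; lra).
      apply Rmult_le_compat_r; [apply chi_weight_ge0; lra | apply Hge, Ht].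
  - rewrite (RInt_ext _ (fun s => scal e (w s))) by reflexivity.
    rewrite (@RInt_scal R_CompleteNormedModule)
      by (apply ex_RInt_continuous_R, chi_weight_continuous).
    unfold scal; simpl; unfold mult; simpl. apply Rmult_le_compat_l; [exact He |].
    apply Rle_trans with (RInt w 0 B).
    + rewrite <- (RInt_Chasles_continuous w 0 a B (chi_weight_continuous nu)).
      assert (0 <= RInt w 0 a); [| lra].
      apply RInt_ge_0; [lra | apply ex_RInt_continuous_R, chi_weight_continuous |].
      intros; apply chi_weight_ge0; lra.
    + apply (exp_dominated_RInt_le_RInt_0_infty w 1 (2 * INR nu));
        [apply (chi_weight_continuous nu) | exact chi_weight_dominated | lra |
         apply chi_weight_ge0]. }
apply Rabs_le_between in Htail. apply Rabs_le_between in Hhead. apply Rabs_le_between in Hmid.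
apply Rabs_le. lra.
Qed.

Lemma chi_mean_one : chi_mean nu (fun _ => 1) = 1.
Proof.
unfold chi_mean. replace (fun s => 1 * chi_weight nu s) with w
  by (apply functional_extensionality; intros s; unfold w; ring).
apply Rinv_r, Rgt_not_eq, chi_norm_pos.
Qed.

Lemma chi_mean_sub (g h : R -> R) (Lg Lh : R) :
  (forall x, continuous g x) -> (forall x, continuous h x) ->
  (forall s, 0 <= s -> Rabs (g s) <= Lg) -> (forall s, 0 <= s -> Rabs (h s) <= Lh) ->
  chi_mean nu (fun s => g s - h s) = chi_mean nu g - chi_mean nu h.
Proof.
intros Hg Hh HLg HLh. unfold chi_mean.
replace (fun s => (g s - h s) * chi_weight nu s) with (fun s => g s * w s - h s * w s)
  by (apply functional_extensionality; intros s; unfold w; ring).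
rewrite (RInt_0_infty_minus _ _ Lg Lh (2 * INR nu)); try apply chi_weighted_continuous;
  try apply chi_weighted_dominated; auto.
unfold w. field. apply Rgt_not_eq, chi_norm_pos.
Qed.

Lemma chi_mean_abs_le (g : R -> R) (L : R) :
  (forall x, continuous g x) -> (forall s, 0 <= s -> Rabs (g s) <= L) ->
  Rabs (chi_mean nu g) <= L.
Proof.
intros Hg HL. assert (HK := chi_norm_pos).
assert (HL0 : 0 <= L) by (eapply Rle_trans; [apply Rabs_pos | apply (HL 0); lra]).
unfold chi_mean. rewrite Rabs_div, (Rabs_right (RInt_0_infty (chi_weight nu))) by (fold w K; lra).
fold w K. apply Rmult_le_reg_r with K; [exact HK |]. unfold Rdiv.
rewrite Rmult_assoc, Rinv_l by lra.
apply (Rle_of_exp_error _ _ L (2 * INR nu) HL0). intros b Hb.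
assert (Hsplit := chi_weighted_integral_split g L 0 b L Hg HL ltac:(lra)
                    ltac:(assert (H := pos_INR nu); lra) Hb HL0 (fun s _ => HL s ltac:(lra))).
lra.
Qed.

Lemma chi_mean_pos (g : R -> R) (L : R) :
  (forall x, continuous g x) -> (forall s, 0 <= s -> Rabs (g s) <= L) ->
  (forall s, 0 <= s -> 0 <= g s) -> (forall s, 0 < s -> 0 < g s) -> 0 < chi_mean nu g.
Proof.
intros Hg HL Hge0 Hgt0. apply Rdiv_lt_0_compat; [| apply chi_norm_pos].
apply Rlt_le_trans with (RInt (fun s => g s * w s) 0 1).
- apply RInt_gt_0; [lra | | intros; apply chi_weighted_continuous, Hg].
  intros s Hs. apply Rmult_lt_0_compat; [apply Hgt0 | apply chi_weight_pos]; lra.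
- apply (exp_dominated_RInt_le_RInt_0_infty _ L (2 * INR nu)).
  + apply chi_weighted_continuous, Hg.
  + apply chi_weighted_dominated, HL.
  + lra.
  + intros s Hs. apply Rmult_le_pos; [apply Hge0, Hs | apply chi_weight_ge0, Hs].
Qed.

(* On [[0, a]] the chi weight has small mass, on [[B, +oo)] it has a small tail. *)
Lemma chi_mean_small (eta : R) : 0 < eta ->
  exists a B, 0 < a <= B /\
  forall g : R -> R, (forall x, continuous g x) -> (forall s, 0 <= s -> Rabs (g s) <= 1) ->
  (forall s, a <= s <= B -> Rabs (g s) <= eta / 2) -> Rabs (chi_mean nu g) < eta.
Proof.
intros Heta. assert (HK := chi_norm_pos).
destruct (exp_opp_mult_small 1 (eta * K / 4) ltac:(lra) ltac:(nra)) as [X HX].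
set (a := Rmin 1 (eta * K / 4)). set (B := Rmax (Rmax (2 * INR nu) X) 1).
assert (Ha : 0 < a) by (apply Rmin_glb_lt; nra).
assert (Ha1 : a <= 1) by apply Rmin_l. assert (HaK : a <= eta * K / 4) by apply Rmin_r.
assert (HB1 : 1 <= B) by apply Rmax_r.
assert (HBnu : 2 * INR nu <= B) by (eapply Rle_trans; [apply Rmax_l | apply Rmax_l]).
assert (HBX : X <= B) by (eapply Rle_trans; [apply Rmax_r | apply Rmax_l]).
exists a, B. split; [lra |]. intros g Hg Hg1 Hgab.
assert (Hsplit := chi_weighted_integral_split g 1 a B (eta / 2) Hg Hg1 ltac:(lra) ltac:(lra)
                    HBnu ltac:(lra) Hgab).
assert (Htail := HX B HBX).
unfold chi_mean. rewrite Rabs_div, (Rabs_right (RInt_0_infty (chi_weight nu))) by (fold w K; lra).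
fold w K. apply Rmult_lt_reg_r with K; [exact HK |]. unfold Rdiv.
rewrite Rmult_assoc, Rinv_l by lra. lra.
Qed.

End ChiMean.

Lemma abs_scaled_le (q s B r : R) : 0 < r -> 0 <= s <= B -> Rabs (q * s / r) <= Rabs q * B / r.
Proof.
intros Hr Hs. rewrite Rabs_div, Rabs_mult, (Rabs_right s), (Rabs_right r) by lra.
apply Rmult_le_compat_r; [apply Rlt_le, Rinv_0_lt_compat, Hr |].
apply Rmult_le_compat_l; [apply Rabs_pos | lra].
Qed.

Lemma Phi_affine_continuous (x r d : R) : forall s, continuous (fun s => Phi (x * s / r - d)) s.
Proof.
intros s. apply (@continuous_comp R_UniformSpace R_UniformSpace R_UniformSpace _ Phi).
- apply (@ex_derive_continuous R_AbsRing R_NormedModule). auto_derive. easy.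
- apply Phi_continuous.
Qed.

Lemma Phi_abs_le_1 (z : R) : Rabs (Phi z) <= 1.
Proof. assert (Hz := Phi_bounds z). apply Rabs_le. lra. Qed.

Lemma one_minus_Phi_abs_le_1 (z : R) : Rabs (1 - Phi z) <= 1.
Proof. assert (Hz := Phi_bounds z). apply Rabs_le. lra. Qed.

Lemma Phi_sub_abs_le_1 (a b : R) : Rabs (Phi a - Phi b) <= 1.
Proof. assert (Ha := Phi_bounds a). assert (Hb := Phi_bounds b). apply Rabs_le. lra. Qed.

Lemma continuous_ivt (f : R -> R) (v : R) :
  continuity f -> (exists a, f a < v) -> (exists b, v < f b) -> exists x, f x = v.
Proof.
intros Hf [a Ha] [b Hb]. destruct (IVT_gen f a b v Hf) as [x [_ Hx]]; [| exists x; exact Hx].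
split; [apply Rle_trans with (f a); [apply Rmin_l | lra] |
        apply Rle_trans with (f b); [lra | apply Rmax_r]].
Qed.

Section NoncentralT.

Variable nu : nat.
Hypothesis nu_pos : (1 <= nu)%nat.

Local Notation sqrt_nu := (sqrt (INR nu)).

Lemma sqrt_nu_pos : 0 < sqrt_nu.
Proof. apply sqrt_lt_R0, lt_0_INR. lia. Qed.

Lemma Fnct_sub (d x d' x' : R) :
  Fnct nu d x - Fnct nu d' x'
  = chi_mean nu (fun s => Phi (x * s / sqrt_nu - d) - Phi (x' * s / sqrt_nu - d')).
Proof.
symmetry. apply (chi_mean_sub nu nu_pos _ _ 1 1); try apply Phi_affine_continuous;
  intros s _; apply Phi_abs_le_1.
Qed.

Lemma one_minus_Fnct (d x : R) :
  1 - Fnct nu d x = chi_mean nu (fun s => 1 - Phi (x * s / sqrt_nu - d)).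
Proof.
rewrite <- (chi_mean_one nu nu_pos) at 1. symmetry.
apply (chi_mean_sub nu nu_pos _ _ 1 1);
  [intros; apply continuous_const | apply Phi_affine_continuous | |];
  intros s _; [rewrite Rabs_R1; lra | apply Phi_abs_le_1].
Qed.

Lemma Fnct_lipschitz_delta (x d d' : R) : Rabs (Fnct nu d x - Fnct nu d' x) <= Rabs (d - d').
Proof.
rewrite Fnct_sub. apply chi_mean_abs_le; [exact nu_pos | |].
- apply continuous_sub_R; apply Phi_affine_continuous.
- intros s _. eapply Rle_trans; [apply Phi_lipschitz |].
  rewrite Rabs_minus_sym. right. f_equal. ring.
Qed.

Lemma Fnct_continuous_delta (x : R) : continuity (fun d => Fnct nu d x).
Proof.
intros d0 eps Heps. exists eps. split; [exact Heps |]. intros d [_ Hd]. simpl in *.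
unfold R_dist in *. eapply Rle_lt_trans; [apply Fnct_lipschitz_delta | exact Hd].
Qed.

Lemma Fnct_decreasing_delta (x d d' : R) : d < d' -> Fnct nu d' x < Fnct nu d x.
Proof.
intros Hdd'.
assert (Hgap : forall s, 0 < Phi (x * s / sqrt_nu - d) - Phi (x * s / sqrt_nu - d'))
  by (intros s; apply Rlt_0_minus, Phi_increasing; lra).
apply Rminus_gt. rewrite Fnct_sub. apply (chi_mean_pos nu nu_pos _ 1).
- apply continuous_sub_R; apply Phi_affine_continuous.
- intros s _. apply Phi_sub_abs_le_1.
- intros s _. apply Rlt_le, Hgap.
- intros s _. apply Hgap.
Qed.

Lemma Fnct_increasing_x (d x x' : R) : x < x' -> Fnct nu d x < Fnct nu d x'.
Proof.
intros Hxx'. assert (Hr := sqrt_nu_pos).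
assert (Hmono : forall s, 0 < s -> x * s / sqrt_nu - d < x' * s / sqrt_nu - d).
{ intros s Hs. unfold Rdiv. apply Rplus_lt_compat_r, Rmult_lt_compat_r;
    [apply Rinv_0_lt_compat, Hr | nra]. }
apply Rminus_gt. rewrite Fnct_sub. apply (chi_mean_pos nu nu_pos _ 1).
- apply continuous_sub_R; apply Phi_affine_continuous.
- intros s _. apply Phi_sub_abs_le_1.
- intros s [Hs | <-].
  + assert (H := Phi_increasing _ _ (Hmono s Hs)). lra.
  + replace (x' * 0 / sqrt_nu - d) with (x * 0 / sqrt_nu - d) by (field; lra). lra.
- intros s Hs. assert (H := Phi_increasing _ _ (Hmono s Hs)). lra.
Qed.

Lemma Fnct_central_opp (x : R) : Fnct nu 0 (- x) = 1 - Fnct nu 0 x.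
Proof.
rewrite one_minus_Fnct. unfold Fnct, chi_mean. do 2 f_equal.
apply functional_extensionality. intros s. rewrite <- Phi_opp. do 2 f_equal.
field. apply Rgt_not_eq, sqrt_nu_pos.
Qed.

Lemma Fnct_continuous_x (d : R) : continuity (fun x => Fnct nu d x).
Proof.
intros x0 eps Heps. assert (Hr := sqrt_nu_pos).
destruct (chi_mean_small nu nu_pos eps Heps) as [a [B [HaB Hsmall]]].
exists (eps * sqrt_nu / (2 * B)). split; [apply Rdiv_lt_0_compat; nra |].
intros x [_ Hx]. simpl in *. unfold R_dist in *. rewrite Fnct_sub. apply Hsmall.
- apply continuous_sub_R; apply Phi_affine_continuous.
- intros s _. apply Phi_sub_abs_le_1.
- intros s Hs. eapply Rle_trans; [apply Phi_lipschitz |].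
  replace (x * s / sqrt_nu - d - (x0 * s / sqrt_nu - d)) with ((x - x0) * s / sqrt_nu)
    by (field; lra).
  eapply Rle_trans; [apply (abs_scaled_le _ _ B); [exact Hr | lra] |].
  assert (HxB : Rabs (x - x0) * B <= eps * sqrt_nu / 2).
  { apply Rmult_lt_compat_r with (r := B) in Hx; [| lra].
    replace (eps * sqrt_nu / (2 * B) * B) with (eps * sqrt_nu / 2) in Hx by (field; lra). lra. }
  apply Rmult_le_reg_r with sqrt_nu; [exact Hr |].
  replace (Rabs (x - x0) * B / sqrt_nu * sqrt_nu) with (Rabs (x - x0) * B) by (field; lra). lra.
Qed.

Lemma Fnct_small_delta (q eta : R) : 0 < eta -> exists d, Fnct nu d q < eta.
Proof.
intros Heta. assert (Hr := sqrt_nu_pos).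
destruct (chi_mean_small nu nu_pos eta Heta) as [a [B [HaB Hsmall]]].
exists (Rabs q * B / sqrt_nu + / (eta / 2)).
apply Rle_lt_trans with (Rabs (Fnct nu (Rabs q * B / sqrt_nu + / (eta / 2)) q)); [apply Rle_abs |].
apply Hsmall; [apply Phi_affine_continuous | intros s _; apply Phi_abs_le_1 |].
intros s Hs. rewrite Rabs_right by (apply Rle_ge, Phi_bounds).
apply Phi_lower_tail; [lra |].
assert (Hq := abs_scaled_le q s B sqrt_nu Hr ltac:(lra)). apply Rabs_le_between in Hq. lra.
Qed.

Lemma Fnct_large_delta (q eta : R) : 0 < eta -> exists d, 1 - eta < Fnct nu d q.
Proof.
intros Heta. assert (Hr := sqrt_nu_pos).
destruct (chi_mean_small nu nu_pos eta Heta) as [a [B [HaB Hsmall]]].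
exists (- (Rabs q * B / sqrt_nu + / (eta / 2))).
enough (H : 1 - Fnct nu (- (Rabs q * B / sqrt_nu + / (eta / 2))) q < eta) by lra.
rewrite one_minus_Fnct. eapply Rle_lt_trans; [apply Rle_abs |].
apply Hsmall.
- apply continuous_sub_R; [intros; apply continuous_const | apply Phi_affine_continuous].
- intros s _. apply one_minus_Phi_abs_le_1.
- intros s Hs. assert (H1 := Phi_bounds (q * s / sqrt_nu - - (Rabs q * B / sqrt_nu + / (eta / 2)))).
  rewrite Rabs_right by lra. apply Phi_upper_tail; [lra |].
  assert (Hq := abs_scaled_le q s B sqrt_nu Hr ltac:(lra)). apply Rabs_le_between in Hq. lra.
Qed.

Lemma Fnct_large_x (d eta : R) : 0 < eta -> exists x, 1 - eta < Fnct nu d x.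
Proof.
intros Heta. assert (Hr := sqrt_nu_pos).
destruct (chi_mean_small nu nu_pos eta Heta) as [a [B [HaB Hsmall]]].
set (y := / (eta / 2) + Rabs d).
assert (Hy : 0 <= y) by (assert (Hinv : 0 < / (eta / 2)) by (apply Rinv_0_lt_compat; lra);
                         assert (Hd := Rabs_pos d); unfold y; lra).
exists (sqrt_nu * y / a).
enough (H : 1 - Fnct nu d (sqrt_nu * y / a) < eta) by lra.
rewrite one_minus_Fnct. eapply Rle_lt_trans; [apply Rle_abs |].
apply Hsmall.
- apply continuous_sub_R; [intros; apply continuous_const | apply Phi_affine_continuous].
- intros s _. apply one_minus_Phi_abs_le_1.
- intros s Hs. assert (H1 := Phi_bounds (sqrt_nu * y / a * s / sqrt_nu - d)).
  rewrite Rabs_right by lra. apply Phi_upper_tail; [lra |].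
  replace (sqrt_nu * y / a * s / sqrt_nu) with (y * (s / a)) by (field; lra).
  assert (Hsa : 1 <= s / a)
    by (apply Rmult_le_reg_r with a; [lra | unfold Rdiv; rewrite Rmult_assoc, Rinv_l; lra]).
  assert (Hd := Rle_abs d). unfold y in *. nra.
Qed.

Lemma Fnct_central_small_x (eta : R) : 0 < eta -> exists x, Fnct nu 0 x < eta.
Proof.
intros Heta. destruct (Fnct_large_x 0 eta Heta) as [x Hx].
exists (- x). rewrite Fnct_central_opp. lra.
Qed.

Lemma Fnct_central_tquant (p : R) : 0 < p < 1 -> Fnct nu 0 (tquant nu p) = p.
Proof.
intros Hp. apply (epsilon_spec (inhabits 0) (fun x => Fnct nu 0 x = p)).
apply continuous_ivt; [apply Fnct_continuous_x | apply Fnct_central_small_x; lra |].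
destruct (Fnct_large_x 0 (1 - p) ltac:(lra)) as [x Hx]. exists x. lra.
Qed.

Lemma Fnct_delta_epsilon (q v : R) :
  0 < v < 1 -> Fnct nu (epsilon (inhabits 0) (fun d => Fnct nu d q = v)) q = v.
Proof.
intros Hv. apply (epsilon_spec (inhabits 0) (fun d => Fnct nu d q = v)).
apply (continuous_ivt (fun d => Fnct nu d q)); [apply Fnct_continuous_delta |
  apply Fnct_small_delta; lra |].
destruct (Fnct_large_delta q (1 - v) ltac:(lra)) as [d Hd]. exists d. lra.
Qed.

Lemma Fnct_delta_sign (q t d : R) :
  Fnct nu d q = Fnct nu 0 t -> (q < t -> d < 0) /\ (q = t -> d = 0) /\ (t < q -> 0 < d).
Proof.
intros Hd.
assert (Hcmp : forall d', Fnct nu d' q < Fnct nu d q -> d < d').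
{ intros d' Hlt. destruct (Rlt_le_dec d d') as [| [Hd' | ->]]; [assumption | |];
    [assert (H := Fnct_decreasing_delta q d' d Hd') |]; lra. }
repeat split; intros Hqt.
- apply Hcmp. rewrite Hd. apply Fnct_increasing_x, Hqt.
- subst t. destruct (Rtotal_order d 0) as [Hneg | [Hzero | Hpos]]; [| exact Hzero |].
  + assert (H := Fnct_decreasing_delta q d 0 Hneg). lra.
  + assert (H := Fnct_decreasing_delta q 0 d Hpos). lra.
- destruct (Rlt_le_dec 0 d) as [| Hle]; [assumption |].
  assert (H := Fnct_increasing_x 0 t q Hqt).
  destruct Hle as [Hlt | ->]; [assert (H' := Fnct_decreasing_delta q d 0 Hlt) |]; lra.
Qed.

End NoncentralT.

Lemma sqrt_ratio_unbounded (n : nat) (Y : R) :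
  (0 < n)%nat -> exists N : nat, forall m, (N <= m)%nat -> Y <= sqrt (INR m / INR n).
Proof.
intros Hn. assert (Hn' : 0 < INR n) by (apply lt_0_INR, Hn).
destruct (INR_unbounded (Y * Y * INR n)) as [N HN]. exists N. intros m Hm.
assert (HNm := le_INR _ _ Hm).
destruct (Rle_dec Y 0) as [HY | HY]; [eapply Rle_trans; [exact HY | apply sqrt_pos] |].
rewrite <- (sqrt_square Y) by lra. apply sqrt_le_1_alt.
apply Rmult_le_reg_r with (INR n); [exact Hn' |].
replace (INR m / INR n * INR n) with (INR m) by (field; lra). lra.
Qed.

Section ScaledPhiLimits.

Variable c : nat -> R.
Hypothesis c_unbounded : forall Y, exists N : nat, forall m, (N <= m)%nat -> Y <= c m.

Lemma Un_cv_one_minus_Phi_scaled_neg (D : R) : D < 0 -> Un_cv (fun m => 1 - Phi (c m * D)) 1.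
Proof.
intros HD eps Heps. destruct (c_unbounded (/ (eps / 2) / - D)) as [N HN]. exists N. intros m Hm.
unfold R_dist. replace (1 - Phi (c m * D) - 1) with (- Phi (c m * D)) by ring.
rewrite Rabs_Ropp, Rabs_right by (apply Rle_ge, Phi_bounds).
apply Rle_lt_trans with (eps / 2); [| lra]. apply Phi_lower_tail; [lra |].
assert (Hc := HN m Hm). apply Rmult_le_compat_r with (r := - D) in Hc; [| lra].
replace (/ (eps / 2) / - D * - D) with (/ (eps / 2)) in Hc by (field; lra). lra.
Qed.

Lemma Un_cv_one_minus_Phi_scaled_pos (D : R) : 0 < D -> Un_cv (fun m => 1 - Phi (c m * D)) 0.
Proof.
intros HD eps Heps. destruct (c_unbounded (/ (eps / 2) / D)) as [N HN]. exists N. intros m Hm.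
unfold R_dist. rewrite Rminus_0_r, Rabs_right
  by (apply Rle_ge; assert (H := Phi_bounds (c m * D)); lra).
apply Rle_lt_trans with (eps / 2); [| lra]. apply Phi_upper_tail; [lra |].
assert (Hc := HN m Hm). apply Rmult_le_compat_r with (r := D) in Hc; [| lra].
replace (/ (eps / 2) / D * D) with (/ (eps / 2)) in Hc by (field; lra). lra.
Qed.

End ScaledPhiLimits.

Lemma Un_cv_one_minus_Phi_scaled_0 (c : nat -> R) : Un_cv (fun m => 1 - Phi (c m * 0)) (/ 2).
Proof.
intros eps Heps. exists 0%nat. intros m _. unfold R_dist.
rewrite Rmult_0_r, Phi_0. replace (1 - / 2 - / 2) with 0 by field. rewrite Rabs_R0. lra.
Qed.

Lemma Un_cv_one_minus_Phi_scaled_limits (n : nat) (D : R) : (0 < n)%nat ->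
  let u := fun m => 1 - Phi (sqrt (INR m / INR n) * D) in
  (D < 0 -> Un_cv u 1) /\ (D = 0 -> Un_cv u (/ 2)) /\ (0 < D -> Un_cv u 0).
Proof.
intros Hn u. assert (Hc := fun Y => sqrt_ratio_unbounded n Y Hn).
repeat split; intros HD; unfold u.
- apply Un_cv_one_minus_Phi_scaled_neg; assumption.
- subst D. apply Un_cv_one_minus_Phi_scaled_0.
- apply Un_cv_one_minus_Phi_scaled_pos; assumption.
Qed.

Lemma qstat_cmp (n : nat) (theta sigma c t : R) :
  (0 < n)%nat -> 0 < sigma ->
  (c < theta + t * sigma / sqrt (INR n) -> qstat n theta sigma c < t) /\
  (c = theta + t * sigma / sqrt (INR n) -> qstat n theta sigma c = t) /\
  (theta + t * sigma / sqrt (INR n) < c -> t < qstat n theta sigma c).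
Proof.
intros Hn Hs. assert (Hr : 0 < sqrt (INR n)) by (apply sqrt_lt_R0, lt_0_INR, Hn).
assert (Hk : 0 < sqrt (INR n) / sigma) by (apply Rdiv_lt_0_compat; assumption).
assert (E : qstat n theta sigma c - t
            = sqrt (INR n) / sigma * (c - (theta + t * sigma / sqrt (INR n))))
  by (unfold qstat; field; lra).
repeat split; intros Hc; [| subst c |]; nra.
Qed.

Theorem corollary2 (n d : nat) (alpha theta sigma c : R) :
  (0 < d)%nat -> (d < n)%nat -> 0 < alpha < 1 -> 0 < sigma ->
  let thL := theta - tquant (n - d) (1 - alpha / 2) * sigma / sqrt (INR n) in
  let thU := theta + tquant (n - d) (1 - alpha / 2) * sigma / sqrt (INR n) in
  let seqU := fun m : nat =>
    1 - Phi (sqrt (INR m / INR n) * deltaU n d alpha theta sigma c) in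
  let seqL := fun m : nat =>
    1 - Phi (sqrt (INR m / INR n) * deltaL n d alpha theta sigma c) in
  (c < thL -> Un_cv seqU 1) /\ (c = thL -> Un_cv seqU (/ 2)) /\
  (thL < c -> Un_cv seqU 0) /\
  (c < thU -> Un_cv seqL 1) /\ (c = thU -> Un_cv seqL (/ 2)) /\
  (thU < c -> Un_cv seqL 0).
Proof.
intros Hd Hdn Halpha Hsigma thL thU seqU seqL.
assert (Hnu : (1 <= n - d)%nat) by lia. assert (Hn : (0 < n)%nat) by lia.
assert (EthL : thL = theta + - tquant (n - d) (1 - alpha / 2) * sigma / sqrt (INR n))
  by (unfold thL, Rdiv; ring).
set (T := tquant (n - d) (1 - alpha / 2)) in *.
assert (HT : Fnct (n - d) 0 T = 1 - alpha / 2) by (apply Fnct_central_tquant; [exact Hnu | lra]).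
assert (HU : Fnct (n - d) (deltaU n d alpha theta sigma c) (qstat n theta sigma c)
             = Fnct (n - d) 0 (- T)).
{ rewrite Fnct_central_opp, HT by exact Hnu. replace (1 - (1 - alpha / 2)) with (alpha / 2) by ring.
  apply Fnct_delta_epsilon; [exact Hnu | lra]. }
assert (HL : Fnct (n - d) (deltaL n d alpha theta sigma c) (qstat n theta sigma c)
             = Fnct (n - d) 0 T).
{ rewrite HT. apply Fnct_delta_epsilon; [exact Hnu | lra]. }
destruct (Fnct_delta_sign _ Hnu _ _ _ HU) as [SU1 [SU2 SU3]].
destruct (Fnct_delta_sign _ Hnu _ _ _ HL) as [SL1 [SL2 SL3]].
destruct (qstat_cmp n theta sigma c (- T) Hn Hsigma) as [CU1 [CU2 CU3]].
destruct (qstat_cmp n theta sigma c T Hn Hsigma) as [CL1 [CL2 CL3]].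
destruct (Un_cv_one_minus_Phi_scaled_limits n (deltaU n d alpha theta sigma c) Hn)
  as [LU1 [LU2 LU3]].
destruct (Un_cv_one_minus_Phi_scaled_limits n (deltaL n d alpha theta sigma c) Hn)
  as [LL1 [LL2 LL3]].
rewrite EthL. repeat split; intros Hc.
- apply LU1, SU1, CU1, Hc.
- apply LU2, SU2, CU2, Hc.
- apply LU3, SU3, CU3, Hc.
- apply LL1, SL1, CL1, Hc.
- apply LL2, SL2, CL2, Hc.
- apply LL3, SL3, CL3, Hc.
Qed.
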